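(* Let $A\subset\mathbb{Z}$ be the union of $s$ segments $P_1,\dots,P_s$ (so $\max P_i+1<\min P_{i+1}$ for $1\le i<s$), where $1\le s\le |A|-1$. Let $S_A$ be the integer matrix with $s$ columns whose rows are all vectors $\mathbf e_{j_1}+\mathbf e_{j_2}-\mathbf e_{j_3}-\mathbf e_{j_4}\in\mathbb{Z}^s$ such that $(P_{j_1}+P_{j_2})\cap(P_{j_3}+P_{j_4})\neq\emptyset$ and not all of $j_1,j_2,j_3,j_4$ are equal. Then $\dim(A)=s-\mathrm{rank}(S_A)$.
   Context: A segment is a nonempty set of consecutive integers. $A\subset\mathbb{Z}$ is the union of $s$ segments if $A=P_1\cup\dots\cup P_s$ with each $P_i$ a segment of length $k_i$, $\max P_i+1<\min P_{i+1}$ for $1\le i<s$, and $k_i>1$ for some $i$. $\mathbf e_i$ denotes the $i$-th standard basis vector. Sets $A\subset G$, $B\subset G'$ in abelian groups are Freiman isomorphic of order 2 if there is a bijection $\phi:A\to B$ with $x+y=z+t\iff\phi(x)+\phi(y)=\phi(z)+\phi(t)$ for all $x,y,z,t\in A$. The dimension $\dim(A)$ is the largest $d$ such that some $B\subset\mathbb{Z}^d$ not contained in a hyperplane is Freiman isomorphic of order 2 to $A$. *)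

From HB Require Import structures.
From mathcomp Require Import all_boot all_order all_algebra.
Set Implicit Arguments. Unset Strict Implicit. Unset Printing Implicit Defensive.
Import Order.TTheory GRing.Theory Num.Theory.
Local Open Scope ring_scope.

Definition seg (a : nat -> int) (k : nat -> nat) (j : nat) : seq int :=
  [seq a j + i%:Z | i <- iota 0 (k j)].

Definition segunion (s : nat) (a : nat -> int) (k : nat -> nat) : seq int :=
  flatten [seq seg a k j | j <- iota 0 s].

Definition card_int (A : seq int) : nat := size (undup A).

Definition in_hyperplane (d : nat) (A : seq int) (phi : int -> 'rV[int]_d) : Prop :=
  exists (n : 'rV[rat]_d) (c : rat), n != 0 /\
    forall x, x \in A -> \sum_(i < d) n 0 i * ((phi x 0 i)%:~R : rat) = c.

Definition freiman2_iso (d : nat) (A : seq int) (phi : int -> 'rV[int]_d) : Prop :=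
  {in A &, injective phi} /\
  forall x y z t, x \in A -> y \in A -> z \in A -> t \in A ->
    (x + y == z + t) = (phi x + phi y == phi z + phi t).

Definition realizable (A : seq int) (d : nat) : Prop :=
  exists phi : int -> 'rV[int]_d, freiman2_iso A phi /\ ~ in_hyperplane A phi.

Definition is_dim (A : seq int) (m : nat) : Prop :=
  realizable A m /\ forall d, realizable A d -> (d <= m)%N.

Definition sums_meet (a : nat -> int) (k : nat -> nat) (j1 j2 j3 j4 : nat) : bool :=
  has (fun x1 => has (fun x2 => has (fun x3 => has (fun x4 => x1 + x2 == x3 + x4)
        (seg a k j4)) (seg a k j3)) (seg a k j2)) (seg a k j1).

Definition quad (s : nat) : finType := ('I_s * 'I_s * 'I_s * 'I_s)%type.

Definition SA_row (s : nat) (a : nat -> int) (k : nat -> nat) (q : quad s) : 'rV[rat]_s :=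
  let: (j1, j2, j3, j4) := q in
  if sums_meet a k j1 j2 j3 j4 && ~~ [&& j1 == j2, j2 == j3 & j3 == j4]
  then \row_(i < s) (((i == j1)%:R + (i == j2)%:R - (i == j3)%:R - (i == j4)%:R) : rat)
  else 0.

(* S_A (with additional zero rows, which do not affect the rank). *)
Definition SA (s : nat) (a : nat -> int) (k : nat -> nat) : 'M[rat]_(#|{: quad s}|, s) :=
  \matrix_(r < #|{: quad s}|) SA_row a k (enum_val r).

From HB Require Import structures.
From mathcomp Require Import all_boot all_order all_algebra.
From mathcomp Require Import ring zify.
Import Order.TTheory GRing.Theory Num.Theory.
Local Open Scope ring_scope.

Set Implicit Arguments. Unset Strict Implicit. Unset Printing Implicit Defensive.

(* Give the point x = a_j + i of the j-th segment the coordinates g(x) = (e_j, i)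
   in Z^(s+1).  Because one segment contains two consecutive integers, every
   Freiman 2-homomorphism of A is affine on each segment with a common step,
   hence of the form x |-> g(x) L.  Such a map is a Freiman isomorphism when the
   vectors g x + g y - g z - g t killed by L are exactly those with x + y = z + t;
   these span the row space R of S_A [1 | -a].  As g(A) spans Q^(s+1) inside an
   affine hyperplane avoiding 0, an L whose image is not in an affine hyperplane
   has rank at most s + 1 - 1 - rank R, with equality for a basis of the joint
   kernel of R and of one point g(x0); hence dim A = s - rank S_A. *)

Local Notation ratmx := (map_mx (intr : int -> rat)).

Lemma mulmx_col_base_eq0 (F : fieldType) p m n (v : 'M[F]_(p, m)) (M : 'M_(m, n)) :
  (v *m col_base M == 0) = (v *m M == 0).
Proof.
have -> : v *m M = v *m col_base M *m row_base M by rewrite -mulmxA mulmx_base.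
by rewrite (mulmx_free_eq0 _ (row_base_free M)).
Qed.

Lemma mxrank_col_mx_sep (F : fieldType) r m (B : 'M[F]_(r, m)) (v : 'rV_m) (h : 'cV_m) :
  B *m h = 0 -> v *m h != 0 -> \rank (col_mx B v) = (\rank B).+1.
Proof.
move=> Bh vh; apply/eqP; rewrite eqn_leq; apply/andP; split.
  rewrite -addsmxE -[(\rank B).+1]addn1.
  apply: leq_trans (leq_of_leqif (mxrank_adds_leqif _ _)) _.
  by rewrite leq_add2l rank_leq_row.
apply: rank_ltmx; rewrite ltmxE -addsmxE addsmxSl col_mx_sub submx_refl /=.
by apply: contra vh => /submxP[D ->]; rewrite -mulmxA Bh mulmx0.
Qed.

Lemma exists_int_scalemx m n (N : 'M[rat]_(m, n)) :
  exists (c : rat) (Nz : 'M[int]_(m, n)), c != 0 /\ ratmx Nz = c *: N.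
Proof.
pose den p := denq (N p.1 p.2).
exists (\prod_(p : 'I_m * 'I_n) den p)%:~R.
exists (\matrix_(i, j) (numq (N i j) * \prod_(p | p != (i, j)) den p)); split.
  by rewrite intr_eq0 gt_eqF // prodr_gt0 // => p _; apply: denq_gt0.
apply/matrixP => i j; rewrite !mxE intrM numqE [in RHS](bigD1 (i, j)) //= intrM.
ring.
Qed.

Lemma ratmx_inj m n : injective (ratmx : 'M[int]_(m, n) -> 'M[rat]_(m, n)).
Proof.
move=> M M' /matrixP eqMM'; apply/matrixP => i j; apply: (@intr_inj rat).
by have := eqMM' i j; rewrite !mxE.
Qed.

Lemma sub_eq_of_add_eq (V : zmodType) (a b c d : V) : a + b = c + d -> a - c = d - b.
Proof. by move=> E; apply/eqP; rewrite subr_eq addrAC (addrC d) -E addrK. Qed.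

Definition freiman_hom (V : zmodType) (A : seq int) (f : int -> V) : Prop :=
  forall x y z t, x \in A -> y \in A -> z \in A -> t \in A ->
    x + y = z + t -> f x + f y = f z + f t.

Lemma eq_freiman_hom (V : zmodType) (A : seq int) (f f' : int -> V) :
  freiman_hom A f -> {in A, f =1 f'} -> freiman_hom A f'.
Proof.
move=> hom_f ff' x y z t Ax Ay Az At /(hom_f _ _ _ _ Ax Ay Az At).
by rewrite !ff'.
Qed.

Lemma freiman2_iso_hom d (A : seq int) (phi : int -> 'rV[int]_d) :
  freiman2_iso A phi -> freiman_hom A (fun x => ratmx (phi x)).
Proof.
case=> _ iso x y z t Ax Ay Az At /eqP; rewrite iso // => /eqP eq_phi.
by rewrite -!map_mxD eq_phi.
Qed.

Lemma freiman2_iso_of_sums d (A : seq int) (phi : int -> 'rV[int]_d) :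
  (forall x y z t, x \in A -> y \in A -> z \in A -> t \in A ->
     (x + y == z + t) = (phi x + phi y == phi z + phi t)) ->
  freiman2_iso A phi.
Proof.
move=> iso; split=> // x y Ax Ay eq_phi.
by have := iso x x y y Ax Ax Ay Ay; rewrite eq_phi eqxx => /eqP; lia.
Qed.

Lemma in_hyperplaneP d (A : seq int) (phi : int -> 'rV[int]_d) :
  in_hyperplane A phi <->
  exists (n : 'cV[rat]_d) (c : rat),
    n != 0 /\ {in A, forall x, ratmx (phi x) *m n = c%:M}.
Proof.
have dot (n : 'rV[rat]_d) x :
    \sum_(i < d) n 0 i * (phi x 0 i)%:~R = (ratmx (phi x) *m n^T) 0 0.
  by rewrite mxE; apply: eq_bigr => i _; rewrite !mxE mulrC.
split=> [[n [c [n0 An]]] | [n [c [n0 An]]]].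
  exists n^T, c; split; first by rewrite trmx_eq0.
  by move=> x Ax; rewrite [LHS]mx11_scalar -dot An.
exists n^T, c; split; first by rewrite trmx_eq0.
by move=> x Ax; rewrite dot trmxK An // mxE eqxx.
Qed.

Section FreimanDimension.

Variables (A : seq int) (x0 : int) (m r : nat).
Variables (gz : int -> 'rV[int]_m) (B : 'M[rat]_(r, m)).
Local Notation g x := (ratmx (gz x)).

Hypothesis x0A : x0 \in A.
Hypothesis g_universal : forall d (f : int -> 'rV[rat]_d),
  freiman_hom A f -> exists L : 'M_(m, d), {in A, forall x, f x = g x *m L}.
Hypothesis g_span :
  forall u : 'cV[rat]_m, {in A, forall x, g x *m u = 0} -> u = 0.
Hypothesis relation_subB : forall x y z t,
  x \in A -> y \in A -> z \in A -> t \in A ->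
  x + y = z + t -> (g x + g y - g z - g t <= B)%MS.
Hypothesis B_relation : forall d (L : 'M[rat]_(m, d)),
  freiman_hom A (fun x => g x *m L) -> B *m L = 0.

Let W := col_mx B (g x0).

Lemma freiman_factor d (f : int -> 'rV[rat]_d) : freiman_hom A f ->
  exists2 L : 'M_(m, d), B *m L = 0 & {in A, forall x, f x = g x *m L}.
Proof.
move=> hom_f; have [L fL] := g_universal hom_f; exists L => //.
exact/B_relation/(eq_freiman_hom hom_f).
Qed.

Lemma freiman_factor_one :
  exists2 h : 'cV_m, B *m h = 0 & {in A, forall x, g x *m h = 1}.
Proof.
have [h Bh gh] := @freiman_factor 1 (fun=> 1) (fun _ _ _ _ _ _ _ _ _ => erefl).
by exists h => // x /gh.
Qed.

Lemma freiman_factor_id :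
  exists2 l : 'cV_m, B *m l = 0 & {in A, forall x, g x *m l = x%:~R%:M}.
Proof.
have hom_id : freiman_hom A (fun x => (x%:~R : rat)%:M : 'rV_1).
  by move=> x y z t _ _ _ _ E; rewrite -!raddfD E.
by have [l Bl gl] := freiman_factor hom_id; exists l => // x /gl.
Qed.

Lemma mxrank_W : \rank W = (\rank B).+1.
Proof.
have [h Bh gh] := freiman_factor_one.
by apply: mxrank_col_mx_sep Bh _; rewrite gh // oner_neq0.
Qed.

Lemma relation_subW x y z t : x \in A -> y \in A -> z \in A -> t \in A ->
  (g x + g y - g z - g t <= W)%MS = (x + y == z + t).
Proof.
move=> Ax Ay Az At; apply/idP/eqP => [|E]; last first.
  by apply: submx_trans (relation_subB Ax Ay Az At E) _; rewrite -addsmxE addsmxSl.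
have [h Bh gh] := freiman_factor_one; have [l Bl gl] := freiman_factor_id.
pose l' := l - x0%:~R *: h.
have gl' w : w \in A -> g w *m l' = (w - x0)%:~R%:M.
  move=> Aw; rewrite mulmxBr -scalemxAr gl // gh //.
  by rewrite intrB raddfB scale_scalar_mx mulr1.
have Wl' : W *m l' = 0.
  by rewrite mul_col_mx mulmxBr -scalemxAr Bl Bh scaler0 subr0 gl' // subrr raddf0 col_mx0.
case/submxP=> D relD; have := congr1 (mulmx^~ l') relD.
rewrite -mulmxA Wl' mulmx0 !mulmxDl !mulNmx !gl' // -!raddfN -!raddfD /=.
move=> /matrixP /(_ 0 0); rewrite !mxE mulr1n => /eqP; rewrite intr_eq0 => /eqP; lia.
Qed.

Lemma realizable_le_corank d : realizable A d -> (d <= m - \rank W)%N.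
Proof.
case=> phi [iso no_hyp]; have [L BL fL] := freiman_factor (freiman2_iso_hom iso).
have [h Bh gh] := freiman_factor_one.
pose L' := L - h *m (g x0 *m L).
have gL' x : x \in A -> g x *m L' = ratmx (phi x) - g x0 *m L.
  by move=> Ax; rewrite mulmxBr !mulmxA gh // mul1mx -(fL x).
have WL' : W *m L' = 0.
  rewrite mul_col_mx gL' // -(fL x0) // subrr.
  by rewrite mulmxBr (mulmxA B) Bh mul0mx BL subrr col_mx0.
have rank_L' : \rank L' = d.
  apply/eqP; rewrite -mxrank_tr; apply: inj_row_free => v vL'.
  apply/eqP/negPn/negP => v_neq0; apply: no_hyp; apply/in_hyperplaneP.
  exists v^T, ((g x0 *m L *m v^T) 0 0); split; first by rewrite trmx_eq0.
  move=> x Ax; rewrite -[ratmx _](subrK (g x0 *m L)) -gL' // mulmxDl -mulmxA.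
  have -> : L' *m v^T = 0 by rewrite -[L']trmxK -trmx_mul vL' trmx0.
  by rewrite mulmx0 add0r -mx11_scalar.
have : (W <= kermx L')%MS by rewrite sub_kermx WL'.
move/mxrankS; rewrite mxrank_ker rank_L'; have := rank_leq_row L'; lia.
Qed.

Lemma realizable_corank : realizable A (m - \rank W).
Proof.
rewrite -mxrank_coker; set N := col_base (cokermx W).
have NW p (v : 'M_(p, m)) : (v *m N == 0) = (v <= W)%MS.
  by rewrite mulmx_col_base_eq0 -submxE.
have [c [Nz [c_neq0 NzE]]] := exists_int_scalemx N.
have phiE x : ratmx (gz x *m Nz) = c *: (g x *m N).
  by rewrite map_mxM NzE -scalemxAr.
exists (fun x => gz x *m Nz); split.
  apply: freiman2_iso_of_sums => x y z t Ax Ay Az At.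
  rewrite -relation_subW // -NW -(inj_eq (@ratmx_inj _ _)) !raddfD /= !phiE.
  rewrite -!scalerDr -[in RHS]subr_eq0 -scalerBr scalemx_eq0.
  by rewrite (negPf c_neq0) !mulmxDl !mulNmx opprD addrA.
case/in_hyperplaneP=> n [kappa [n_neq0 An]].
have [h Bh gh] := freiman_factor_one.
have Nn : N *m n = (kappa / c) *: h.
  apply/eqP; rewrite -subr_eq0; apply/eqP/g_span => x Ax.
  rewrite mulmxBr -scalemxAr gh // mulmxA.
  apply: (scalerI c_neq0); rewrite scalerBr scalemxAl -phiE An //.
  by rewrite scalerA mulrC divfK // scalemx1 subrr scaler0.
have /eqP g0N : g x0 *m N == 0 by rewrite NW -addsmxE addsmxSr.
have : g x0 *m (N *m n) = 0 by rewrite mulmxA g0N mul0mx.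
rewrite Nn -scalemxAr gh // => /eqP; rewrite scalemx_eq0 oner_eq0 orbF => /eqP k0.
move: Nn; rewrite k0 scale0r -(mulmx0 _ N) => /(row_full_inj (col_base_full _)) n0.
by rewrite n0 eqxx in n_neq0.
Qed.

Theorem is_dim_universal : is_dim A (m - (\rank B).+1).
Proof.
by rewrite -mxrank_W; split; [apply: realizable_corank | apply: realizable_le_corank].
Qed.

End FreimanDimension.

Lemma mem_seg a k j x :
  reflect (exists2 i, (i < k j)%N & x = a j + i%:Z) (x \in seg a k j).
Proof.
apply: (iffP mapP) => [[i]|[i]]; rewrite ?mem_iota => lt_i ->; exists i => //.
by rewrite mem_iota.
Qed.

Lemma sums_meetP a k j1 j2 j3 j4 :
  reflect (exists x1 x2 x3 x4, [/\ x1 \in seg a k j1, x2 \in seg a k j2,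
             x3 \in seg a k j3, x4 \in seg a k j4 & x1 + x2 = x3 + x4])
          (sums_meet a k j1 j2 j3 j4).
Proof.
apply: (iffP idP) => [|[x1 [x2 [x3 [x4 [s1 s2 s3 s4 E]]]]]].
  case/hasP=> x1 s1 /hasP[x2 s2 /hasP[x3 s3 /hasP[x4 s4 /eqP E]]].
  by exists x1, x2, x3, x4.
apply/hasP; exists x1 => //; apply/hasP; exists x2 => //.
by apply/hasP; exists x3 => //; apply/hasP; exists x4 => //; apply/eqP.
Qed.

Definition quad_row s (j1 j2 j3 j4 : 'I_s) : 'rV[rat]_s :=
  delta_mx 0 j1 + delta_mx 0 j2 - delta_mx 0 j3 - delta_mx 0 j4.

Lemma SA_rowE s a k (j1 j2 j3 j4 : 'I_s) :
  SA_row a k (j1, j2, j3, j4) =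
  if sums_meet a k j1 j2 j3 j4 && ~~ [&& j1 == j2, j2 == j3 & j3 == j4]
  then quad_row j1 j2 j3 j4 else 0.
Proof. by rewrite /SA_row; case: ifP => // _; apply/rowP => l; rewrite !mxE. Qed.

Lemma quad_row_sub_SA s a k (j1 j2 j3 j4 : 'I_s) :
  sums_meet a k j1 j2 j3 j4 -> (quad_row j1 j2 j3 j4 <= SA s a k)%MS.
Proof.
move=> meet; have [|distinct] := boolP [&& j1 == j2, j2 == j3 & j3 == j4].
  by case/and3P=> /eqP-> /eqP-> /eqP->; rewrite /quad_row addrK subrr sub0mx.
have -> : quad_row j1 j2 j3 j4 = row (enum_rank ((j1, j2, j3, j4) : quad s)) (SA s a k).
  by rewrite rowK enum_rankK SA_rowE meet distinct.
exact: row_sub.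
Qed.

Section SegmentUnion.

Variables (s : nat) (a : nat -> int) (k : nat -> nat).
Hypothesis a_sep : forall j, (j.+1 < s)%N -> a j + (k j)%:Z < a j.+1.

Local Notation A := (segunion s a k).

Lemma segunionP x : reflect (exists j : 'I_s, x \in seg a k j) (x \in A).
Proof.
apply: (iffP flattenP) => [[_ /mapP[j] + ->]|[j x_j]].
  by rewrite mem_iota add0n => lt_js x_j; exists (Ordinal lt_js).
by exists (seg a k j) => //; apply: map_f; rewrite mem_iota add0n ltn_ord.
Qed.

Lemma seg_sub (j : 'I_s) x : x \in seg a k j -> x \in A.
Proof. by move=> x_j; apply/segunionP; exists j. Qed.

Lemma seg_point_mem (j : 'I_s) i : (i < k j)%N -> a j + i%:Z \in A.
Proof. by move=> lt_i; apply: (seg_sub (j := j)); apply/mem_seg; exists i. Qed.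

Lemma seg_end_le j j' : (j < j')%N -> (j' < s)%N -> a j + (k j)%:Z <= a j'.
Proof.
elim: j' => // j' IH; rewrite ltnS leq_eqVlt => /orP[/eqP<- /a_sep/ltW //|lt_jj'].
move=> lt_j's; have := IH lt_jj' (ltnW lt_j's); have := a_sep lt_j's; lia.
Qed.

Lemma mem_seg_uniq (j j' : 'I_s) x : x \in seg a k j -> x \in seg a k j' -> j = j'.
Proof.
wlog le_jj' : j j' / (j <= j')%N => [hwlog|].
  by case: (leqP j j') => [|/ltnW] le x_j x_j'; [|apply/esym]; apply: hwlog le _ _.
move=> /mem_seg[i lt_i ->] /mem_seg[i' _ E].
apply/ord_inj/eqP; rewrite eqn_leq le_jj' leqNgt; apply/negP => lt_jj'.
by have := seg_end_le lt_jj' (ltn_ord j'); lia.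
Qed.

Variable jl : 'I_s.

(* [jl] is only the junk value of [seg_index] outside [A]. *)
Definition seg_index x : 'I_s := odflt jl [pick j : 'I_s | x \in seg a k j].

Lemma seg_indexE (j : 'I_s) x : x \in seg a k j -> seg_index x = j.
Proof.
move=> x_j; rewrite /seg_index; case: pickP => [j' x_j' | /(_ j)]; last by rewrite x_j.
exact: mem_seg_uniq x_j' x_j.
Qed.

Definition segcoord x : 'rV[int]_(s + 1) :=
  row_mx (delta_mx 0 (seg_index x)) (x - a (seg_index x))%:M.

Local Notation g x := (ratmx (segcoord x)).

Lemma ratmx_segcoord (j : 'I_s) x : x \in seg a k j ->
  g x = row_mx (delta_mx 0 j) ((x - a j)%:~R)%:M.
Proof.
by move=> x_j; rewrite /segcoord (seg_indexE x_j) map_row_mx map_delta_mx map_scalar_mx.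
Qed.

Lemma ratmx_segcoord_point (j : 'I_s) i : (i < k j)%N ->
  g (a j + i%:Z) = row_mx (delta_mx 0 j) (i%:R)%:M.
Proof.
move=> lt_i; have /ratmx_segcoord-> : a j + i%:Z \in seg a k j by apply/mem_seg; exists i.
by rewrite addrC addKr pmulrn.
Qed.

Definition segshift : 'M[rat]_(s, s + 1) := row_mx 1%:M (- \col_(j < s) (a j)%:~R).

Local Notation B := (SA s a k *m segshift).

Lemma segshift_free : row_free segshift.
Proof.
by apply: inj_row_free => v; rewrite mul_mx_row mulmx1 -row_mx0 => /eq_row_mx[].
Qed.

Lemma segcoord_relation (j1 j2 j3 j4 : 'I_s) x1 x2 x3 x4 :
  x1 \in seg a k j1 -> x2 \in seg a k j2 -> x3 \in seg a k j3 -> x4 \in seg a k j4 ->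
  x1 + x2 = x3 + x4 -> g x1 + g x2 - g x3 - g x4 = quad_row j1 j2 j3 j4 *m segshift.
Proof.
move=> x_1 x_2 x_3 x_4 E.
rewrite (ratmx_segcoord x_1) (ratmx_segcoord x_2) (ratmx_segcoord x_3) (ratmx_segcoord x_4).
rewrite !opp_row_mx !add_row_mx mul_mx_row mulmx1 mulmxN; congr row_mx.
have row_a (j : 'I_s) : delta_mx 0 j *m \col_l (a l)%:~R = ((a j)%:~R)%:M :> 'M[rat]_1.
  by rewrite -rowE; apply/rowP => l; rewrite !ord1 !mxE.
rewrite !mulmxDl !mulNmx !row_a -!raddfN -!raddfD -!raddfN /=.
by congr (_%:M); congr (_%:~R); lia.
Qed.

Lemma segcoord_relation_sub x y z t : x \in A -> y \in A -> z \in A -> t \in A ->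
  x + y = z + t -> (g x + g y - g z - g t <= B)%MS.
Proof.
move=> /segunionP[j1 x_1] /segunionP[j2 x_2] /segunionP[j3 x_3] /segunionP[j4 x_4] E.
rewrite (segcoord_relation x_1 x_2 x_3 x_4 E) submxMr // quad_row_sub_SA //.
by apply/sums_meetP; exists x, y, z, t.
Qed.

Lemma segcoord_relation_ker d (L : 'M_(s + 1, d)) :
  freiman_hom A (fun x => g x *m L) -> B *m L = 0.
Proof.
move=> hom_L; apply/row_matrixP => q; rewrite row0 !row_mul rowK.
case: (enum_val q) => [[[j1 j2] j3] j4]; rewrite SA_rowE; case: ifP; last by rewrite !mul0mx.
case/andP=> /sums_meetP[x1 [x2 [x3 [x4 [x_1 x_2 x_3 x_4 E]]]]] _.
have := hom_L _ _ _ _ (seg_sub x_1) (seg_sub x_2) (seg_sub x_3) (seg_sub x_4) E.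
rewrite -(segcoord_relation x_1 x_2 x_3 x_4 E) !mulmxDl !mulNmx => ->.
by rewrite addrAC addrK subrr.
Qed.

Hypothesis k_jl : (1 < k jl)%N.

Section FreimanHom.

Variables (d : nat) (f : int -> 'rV[rat]_d).
Hypothesis hom_f : freiman_hom A f.

Let w := f (a jl + 1%:Z) - f (a jl).

Lemma freiman_hom_seg_step (j : 'I_s) i :
  (i.+1 < k j)%N -> f (a j + i.+1%:Z) - f (a j + i%:Z) = w.
Proof.
have a_jl : a jl \in A by rewrite -[a jl]addr0 seg_point_mem // ltnW.
elim: i => [|i IH] lt_i; last rewrite -IH 1?ltnW //.
  by apply: sub_eq_of_add_eq; apply: hom_f; rewrite ?seg_point_mem ?a_jl; lia.
by apply: sub_eq_of_add_eq; apply: hom_f; rewrite ?seg_point_mem; lia.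
Qed.

Lemma freiman_hom_seg_affine (j : 'I_s) i :
  (i < k j)%N -> f (a j + i%:Z) = f (a j) + i%:R *: w.
Proof.
elim: i => [|i IH] lt_i; first by rewrite addr0 scale0r addr0.
rewrite -[LHS](subrK (f (a j + i%:Z))) freiman_hom_seg_step // IH 1?ltnW //.
by rewrite mulrS scalerDl scale1r addrCA.
Qed.

Lemma segcoord_universal :
  exists L : 'M_(s + 1, d), {in A, forall x, f x = g x *m L}.
Proof.
exists (col_mx (\matrix_(j < s) f (a j)) w) => x /segunionP[j /mem_seg[i lt_i ->]].
rewrite ratmx_segcoord_point // mul_row_col -rowE rowK mul_scalar_mx.
exact: freiman_hom_seg_affine.
Qed.

End FreimanHom.

Hypothesis k_gt0 : forall j, (j < s)%N -> (0 < k j)%N.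

Lemma segcoord_span (u : 'cV[rat]_(s + 1)) : {in A, forall x, g x *m u = 0} -> u = 0.
Proof.
move=> gu; apply/colP => l; rewrite mxE -[l]splitK; case: (split l) => [j|o] /=.
  have := gu _ (seg_point_mem (k_gt0 (ltn_ord j))).
  rewrite ratmx_segcoord_point ?k_gt0 // mulr0n raddf0 -delta_mx_lshift -rowE.
  by move=> /colP/(_ 0); rewrite !mxE.
have := gu _ (seg_point_mem k_jl).
rewrite -(subr0 (g _ *m u)) -[X in _ - X](gu (a jl + 0%:Z)) ?seg_point_mem 1?ltnW //.
rewrite -mulmxBl (ratmx_segcoord_point k_jl) (ratmx_segcoord_point (ltnW k_jl)).
rewrite opp_row_mx add_row_mx subrr -raddfB /= subr0.
have -> : 1%:M = delta_mx 0 o :> 'M[rat]_1 by apply/matrixP => ? ?; rewrite !ord1 !mxE.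
by rewrite -delta_mx_rshift -rowE => /colP/(_ 0); rewrite !mxE.
Qed.

End SegmentUnion.

Lemma mxrank_SA_segshift s a k : \rank (SA s a k *m segshift s a) = \rank (SA s a k).
Proof. exact/mxrankMfree/segshift_free. Qed.

(* The hypotheses 1 <= s and s <= |A| - 1 follow from the others. *)
Theorem corollary2p2 (s : nat) (a : nat -> int) (k : nat -> nat) :
  (forall j, (j < s)%N -> (0 < k j)%N) ->
  (forall j, (j.+1 < s)%N -> a j + (k j)%:Z < a j.+1) ->
  (exists j, (j < s)%N /\ (1 < k j)%N) ->
  (1 <= s)%N -> (s <= card_int (segunion s a k) - 1)%N ->
  is_dim (segunion s a k) (s - \rank (SA s a k)).
Proof.
move=> k_gt0 a_sep [j [lt_js k_j]] _ _.
pose jl := Ordinal lt_js; have k_jl : (1 < k jl)%N by [].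
have a_jl : a jl \in segunion s a k by rewrite -[a jl]addr0 seg_point_mem // ltnW.
have := is_dim_universal a_jl (segcoord_universal a_sep k_jl)
  (segcoord_span a_sep k_jl k_gt0) (segcoord_relation_sub a_sep jl)
  (@segcoord_relation_ker _ _ _ a_sep jl).
by rewrite mxrank_SA_segshift addn1 subSS.
Qed.
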